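(* Let $G=(V,E)$ be a nontrivial graph of order $n$ with $\tau(G)=\tau>\frac{n}{2}$, and suppose its $\tau$-set $W$ satisfies $G[W]\cong K_\tau$. Then: (a) if $G$ contains a $W$-distinguishing vertex, then $\beta_p(G)=\tau+1$; (b) if the induced subgraph $G[N(W)\setminus W]$ has an isolated vertex, then $\beta_p(G)=\tau+1$; (c) if $|N(W)\setminus W|=1$, then $\beta_p(G)=\tau+1$; (d) if $G[N(W)\setminus W]$ contains a universal vertex $v$ (adjacent to all other vertices of $N(W)\setminus W$), then $v$ is adjacent to at least one vertex of $V\setminus N[W]$.
   Context: All graphs are finite, simple, undirected and connected. $N(W)=\bigcup_{v\in W}N(v)$, $N[W]=N(W)\cup W$. Two vertices $u,v$ are twins if $N(u)\setminus\{v\}=N(v)\setminus\{u\}$; the twin number $\tau(G)$ is the maximum cardinality of an equivalence class of the twin relation; a $\tau$-set is a set of pairwise twin vertices of cardinality $\tau(G)$. Given a $\tau$-set $W$ with $G[W]$ complete, a vertex $v\in V\setminus W$ is $W$-distinguishing if $d(v,z)\ne d(v,W)$ for every $z\in N(W)\setminus W$, where $d(v,W)=\min_{w\in W}d(v,w)$. For a partition $\Pi=\{S_1,\dots,S_k\}$ of $V$, $r(u|\Pi)=(d(u,S_1),\dots,d(u,S_k))$; $\Pi$ is locating if $r(u|\Pi)\ne r(v|\Pi)$ for all distinct $u,v$; $\beta_p(G)$ is the minimum size of a locating partition. *)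

(* finite simple connected graphs as a symmetric irreflexive
   relation e on a finType T. *)
From mathcomp Require Import all_boot.
Set Implicit Arguments. Unset Strict Implicit. Unset Printing Implicit Defensive.

Section Graph.
Variables (T : finType) (e : rel T).

Definition nbh (v : T) : {set T} := [set u | e v u].
Definition nbhS (W : {set T}) : {set T} := \bigcup_(v in W) nbh v.
Definition cnbhS (W : {set T}) : {set T} := nbhS W :|: W.

Fixpoint ball (k : nat) (u : T) : {set T} :=
  if k is k'.+1 then cnbhS (ball k' u) else [set u].

(* graph distance (correct for connected graphs, where it is < #|T|) *)
Definition dist (u v : T) : nat :=
  \big[minn/#|T|]_(k < #|T| | v \in ball k u) k.

Definition dset (v : T) (S : {set T}) : nat :=
  \big[minn/#|T|]_(w in S) dist v w.

Definition twin (u v : T) : bool := nbh u :\ v == nbh v :\ u.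

Definition twin_number : nat := \max_(x : T) #|[set y | twin x y]|.

Definition tau_set (W : {set T}) : Prop :=
  (forall u v, u \in W -> v \in W -> twin u v) /\ #|W| = twin_number.

Definition complete_on (W : {set T}) : Prop :=
  forall u v, u \in W -> v \in W -> u != v -> e u v.

Definition W_distinguishing (W : {set T}) (v : T) : Prop :=
  v \notin W /\ forall z, z \in nbhS W :\: W -> dist v z <> dset v W.

(* locating partition: partition of V (finset's [partition], blocks nonempty);
   the representation vectors differ iff some block is at different distance. *)
Definition locating_partition (P : {set {set T}}) : Prop :=
  partition P [set: T] /\
  forall u v, u != v -> exists2 S, S \in P & dset u S <> dset v S.

Definition partition_dim_is (k : nat) : Prop :=
  (exists2 P, locating_partition P & #|P| = k) /\
  (forall P, locating_partition P -> k <= #|P|).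

End Graph.

(* Twins are at the same distance from every set containing neither of them,
   so a locating partition puts the vertices of the twin clique W into #|W|
   distinct blocks.  With only #|W| blocks, a vertex x of N(W) \ W would share
   the block of some w in W, and every other block contains a vertex of W
   adjacent to both x and w, so x and w would not be separated: hence
   beta_p > #|W|.  Conversely, as n < 2 #|W|, the vertices outside W other
   than a W-distinguishing vertex v can be matched injectively into W with
   some w1 in W left unmatched.  Gluing each matched vertex to its partner
   and keeping v and all other vertices as singletons gives #|W| + 1 blocks;
   a glued pair is separated by the block {v} when its outer vertex lies in
   N(W) (as v is W-distinguishing), and by {w1} otherwise.  An isolated
   vertex of N(W) \ W is W-distinguishing, which gives (b) and (c); a
   universal vertex of N(W) \ W without neighbours outside N[W] would be a
   twin of the vertices of W, contradicting the maximality of #|W|. *)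

From mathcomp Require Import all_boot zify.
Set Implicit Arguments. Unset Strict Implicit. Unset Printing Implicit Defensive.

Section BigMinn.
Variables (I : finType) (P : pred I) (F : I -> nat) (m : nat).

Lemma big_minn_leq i : P i -> \big[minn/m]_(j | P j) F j <= F i.
Proof.
move=> Pi; have : i \in index_enum I := mem_index_enum i.
elim: (index_enum I) => // a s IH; rewrite inE big_cons => /predU1P[<-|/IH].
  by rewrite Pi geq_minl.
by case: ifP => // _; apply: leq_trans; apply: geq_minr.
Qed.

Lemma leq_big_minn b :
  b <= m -> (forall i, P i -> b <= F i) -> b <= \big[minn/m]_(j | P j) F j.
Proof.
by move=> bm bF; elim/big_ind: _ => // x y bx b_y; rewrite leq_min bx.
Qed.

Lemma big_minn_attained :
  \big[minn/m]_(j | P j) F j = m \/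
  exists2 i, P i & \big[minn/m]_(j | P j) F j = F i.
Proof.
elim/big_ind: _; [by left | | by move=> i Pi; right; exists i].
by move=> x y Hx Hy; rewrite /minn; case: ifP.
Qed.

End BigMinn.

Lemma pblock_eqE (T : finType) (P : {set {set T}}) S x :
  partition P [set: T] -> S \in P -> (pblock P x == S) = (x \in S).
Proof.
case/and3P => /eqP cov triv _ SP; apply/eqP/idP => [<- | xS]; last exact: def_pblock.
by rewrite mem_pblock cov inE.
Qed.

Lemma exists_inj_into (T : finType) (A B : {set T}) : #|A| <= #|B| ->
  exists f : T -> T, {in A &, injective f} /\ {in A, forall x, f x \in B}.
Proof.
move=> AB; exists (fun x => nth x (enum B) (index x (enum A))).
have idx x : x \in A -> index x (enum A) < size (enum B).
  by move=> xA; rewrite -cardE (leq_trans _ AB) // cardE index_mem mem_enum.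
split=> [x y xA yA /eqP | x xA]; last by rewrite -mem_enum mem_nth ?idx.
rewrite [nth y _ _](set_nth_default x) ?idx // nth_uniq ?idx ?enum_uniq // => /eqP eq_idx.
by rewrite -[x](nth_index x (_ : x \in enum A)) ?mem_enum // eq_idx nth_index ?mem_enum.
Qed.

Lemma exists_inj_avoid (T : finType) (A B : {set T}) : #|A| < #|B| ->
  exists f : T -> T, [/\ {in A &, injective f}, {in A, forall x, f x \in B}
                       & exists2 b, b \in B & b \notin f @: A].
Proof.
move=> AB; have [f [f_inj fAB]] := exists_inj_into (ltnW AB).
have : ~~ (B \subset f @: A).
  apply: contraTN AB => /subset_leq_card; rewrite -leqNgt => /leq_trans; apply.
  exact: leq_imset_card.
by case/subsetPn => b bB bfA; exists f; split=> //; exists b.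
Qed.

Section Balls.
Variables (T : finType) (e : rel T).
Implicit Types (u v w x y z : T).

Lemma ball_center k u : u \in ball e k u.
Proof. by elim: k => [|k IH] /=; [rewrite inE | rewrite /cnbhS inE IH orbT]. Qed.

Lemma ballS k u v :
  (v \in ball e k.+1 u) = (v \in ball e k u) || [exists z in ball e k u, e z v].
Proof.
rewrite /= /cnbhS inE orbC; congr (_ || _).
apply/bigcupP/existsP => [[z zin]|[z /andP[zin ezv]]].
  by rewrite inE => ezv; exists z; rewrite zin.
by exists z; rewrite // inE.
Qed.

Lemma ball_subS k u v : v \in ball e k u -> v \in ball e k.+1 u.
Proof. by rewrite ballS => ->. Qed.

Lemma ball_edge k u v y : v \in ball e k u -> e v y -> y \in ball e k.+1 u.
Proof.
by move=> vin evy; rewrite ballS; apply/orP; right; apply/existsP; exists v; rewrite vin.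
Qed.

Lemma ball_edge_center k u z v : e u z -> v \in ball e k z -> v \in ball e k.+1 u.
Proof.
move=> euz; elim: k v => [|k IH] v.
  by rewrite inE => /eqP->; apply: ball_edge (ball_center _ _) euz.
rewrite ballS => /orP[/IH/ball_subS // | /existsP[y /andP[/IH yin eyv]]].
exact: ball_edge yin eyv.
Qed.

Lemma twin_edge a b c : twin e a b -> e a c -> c != b -> e b c.
Proof.
move=> /eqP tw eac cb; have : c \in nbh e a :\ b by rewrite !inE cb.
by rewrite tw !inE => /andP[].
Qed.

Hypothesis e_sym : symmetric e.

Lemma ball_sym k u v : (v \in ball e k u) = (u \in ball e k v).
Proof.
suff imp k' u' v' : v' \in ball e k' u' -> u' \in ball e k' v'.
  by apply/idP/idP; apply: imp.
elim: k' u' v' => [|n IH] u' v'; first by rewrite !inE => /eqP->.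
rewrite ballS => /orP[/IH/ball_subS // | /existsP[z /andP[/IH zin ezv]]].
by apply: ball_edge_center zin; rewrite e_sym.
Qed.

Lemma ball_twin k w w' x :
  twin e w w' -> x != w -> w \in ball e k x -> w' \in ball e k x.
Proof.
move=> tw xw; elim: k => [|k IH]; first by rewrite inE => /eqP wx; rewrite wx eqxx in xw.
rewrite ballS => /orP[/IH/ball_subS // | /existsP[y /andP[yin eyw]]].
have [<-|yw'] := eqVneq y w'; first exact: ball_subS.
by apply: ball_edge yin _; rewrite e_sym (twin_edge tw) // e_sym.
Qed.

End Balls.

Section Distance.
Variables (T : finType) (e : rel T).
Implicit Types (u v w x y z : T) (S : {set T}).

Lemma dist_attained u v :
  dist e u v = #|T| \/ exists2 k : 'I_#|T|, v \in ball e k u & dist e u v = k.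
Proof. exact: big_minn_attained. Qed.

Lemma dist_leq_card u v : dist e u v <= #|T|.
Proof. by case: (dist_attained u v) => [-> | [k _ ->]] //; apply: ltnW. Qed.

Lemma dist_leq k u v : k < #|T| -> v \in ball e k u -> dist e u v <= k.
Proof.
move=> kT vin; pose P j := v \in ball e (@nat_of_ord #|T| j) u.
exact: (@big_minn_leq _ P (@nat_of_ord _) _ (Ordinal kT) vin).
Qed.

Lemma dist_ball u v : dist e u v < #|T| -> v \in ball e (dist e u v) u.
Proof. by case: (dist_attained u v) => [-> | [k kin ->]]; rewrite ?ltnn. Qed.

Lemma eq_dist u v u' v' :
  (forall k, (v \in ball e k u) = (v' \in ball e k u')) -> dist e u v = dist e u' v'.
Proof. by move=> eqb; apply: eq_bigl => k; apply: eqb. Qed.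

Lemma dist_self u : dist e u u = 0.
Proof.
have T0 : 0 < #|T| by apply/card_gt0P; exists u.
by apply/eqP; rewrite -leqn0 (dist_leq T0) // ball_center.
Qed.

Lemma dist_eq0 u v : (dist e u v == 0) = (v == u).
Proof.
apply/eqP/eqP => [d0|->]; last exact: dist_self.
have T0 : 0 < #|T| by apply/card_gt0P; exists u.
have /dist_ball : dist e u v < #|T| by rewrite d0.
by rewrite d0 inE => /eqP.
Qed.

Lemma dset_leq u S w : w \in S -> dset e u S <= dist e u w.
Proof. exact: big_minn_leq. Qed.

Lemma dset_const u S c a :
  a \in S -> {in S, forall w, dist e u w = c} -> dset e u S = c.
Proof.
move=> aS Sc; apply/eqP; rewrite eqn_leq -{1}(Sc a aS) dset_leq //.
by apply: leq_big_minn => [|w /Sc <-] //; rewrite -(Sc a aS) dist_leq_card.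
Qed.

Lemma dset1 u a : dset e u [set a] = dist e u a.
Proof. by apply: dset_const (set11 a) _ => w /set1P->. Qed.

Lemma dset_eq0 u S : (dset e u S == 0) = (u \in S).
Proof.
apply/eqP/idP => [d0 | uS]; last by apply/eqP; rewrite -leqn0 -(dist_self u) dset_leq.
have T0 : 0 < #|T| by apply/card_gt0P; exists u.
case: (big_minn_attained (mem S) (dist e u) #|T|) => [|[w wS]]; rewrite -/(dset e u S) d0.
  by move=> T0'; rewrite -T0' in T0.
by move/esym/eqP; rewrite dist_eq0 => /eqP <-.
Qed.

Lemma dset_eq1 u S s : 1 < #|T| -> u \notin S -> s \in S -> e u s -> dset e u S = 1.
Proof.
move=> T1 uS sS eus; apply/eqP; rewrite eqn_leq lt0n dset_eq0 uS andbT.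
by apply: leq_trans (dset_leq u sS) (dist_leq T1 (ball_edge (ball_center _ _ _) eus)).
Qed.

Hypothesis e_sym : symmetric e.

Lemma dist_sym u v : dist e u v = dist e v u.
Proof. by apply: eq_dist => k; apply: ball_sym. Qed.

Lemma dist_twin w w' x :
  twin e w w' -> x != w -> x != w' -> dist e x w = dist e x w'.
Proof.
move=> tw xw xw'; apply: eq_dist => k; apply/idP/idP; apply: ball_twin => //.
by rewrite /twin eq_sym.
Qed.

Lemma dset_twin w w' S :
  twin e w w' -> w \notin S -> w' \notin S -> dset e w S = dset e w' S.
Proof.
move=> tw wS w'S; apply: eq_bigr => y yS.
rewrite !(dist_sym _ y) (dist_twin tw) //.
  by apply: contraNneq wS => <-.
by apply: contraNneq w'S => <-.
Qed.

Lemma dset_twin_set (W : {set T}) v w :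
  {in W &, forall x y, twin e x y} -> v \notin W -> w \in W -> dset e v W = dist e v w.
Proof.
move=> twW vW wW; apply: (dset_const (a := w)) => // w' w'W.
by apply: (dist_twin (twW _ _ w'W wW)); apply: contraNneq vW => ->.
Qed.

Hypothesis e_irr : irreflexive e.

Lemma dist_eq1 u v : 1 < #|T| -> (dist e u v == 1) = e u v.
Proof.
move=> T1; apply/eqP/idP => [d1 | euv].
  have /dist_ball : dist e u v < #|T| by rewrite d1.
  rewrite d1 ballS.
  case/orP => [|/existsP[z /andP[]]]; rewrite inE => /eqP; last by move->.
  by move=> vu; move: d1; rewrite vu dist_self.
apply/eqP; rewrite eqn_leq (dist_leq T1) ?(ball_edge (ball_center _ _ _) euv) //.
by rewrite lt0n dist_eq0; apply: contraTneq euv => ->; rewrite e_irr.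
Qed.

End Distance.

Lemma nbhS_setD_neq0 (T : finType) (e : rel T) (W : {set T}) a b :
  symmetric e -> a \in W -> b \notin W -> connect e a b -> nbhS e W :\: W != set0.
Proof.
move=> e_sym aW bW ab; apply: contraNneq bW => NW0.
suff clW : closed e W by rewrite -(closed_connect clW ab).
apply: (intro_closed (sym_connect_sym e_sym)) => x y exy xW; apply: contraT => yW.
by rewrite -(in_set0 y) -NW0 inE yW; apply/bigcupP; exists x; rewrite ?inE.
Qed.

Section PreimPartition.
Variables (T rT : finType) (e : rel T) (g : T -> rT).
Local Notation P := (preim_partition g [set: T]).

Lemma card_preim_partition : #|P| = #|g @: [set: T]|.
Proof.
pose block t := [set z in [set: T] | t == g z].
rewrite [P](_ : _ = block @: (g @: [set: T])); last by rewrite -imset_comp.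
rewrite card_in_imset // => _ _ /imsetP[a _ ->] /imsetP[b _ ->] /setP/(_ a).
by rewrite !inE eqxx => /esym/eqP.
Qed.

Lemma preim_partition_set1 t : (forall z, g z = g t -> z = t) -> [set t] \in P.
Proof.
move=> gt; suff -> : [set t] = [set z in [set: T] | g t == g z] by apply: imset_f.
by apply/setP => z; rewrite !inE; apply/eqP/eqP => [-> | /esym/gt].
Qed.

Lemma preim_partition_locating :
  (forall u u', u != u' -> g u = g u' ->
     exists2 S, S \in P & dset e u S <> dset e u' S) ->
  locating_partition e P.
Proof.
move=> sep; split=> [|u u' uu']; first exact: preim_partitionP.
have [|g_neq] := eqVneq (g u) (g u'); first exact: sep.
pose S := [set z in [set: T] | g u == g z].
have uS : dset e u S == 0 by rewrite dset_eq0 /S !inE eqxx.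
have u'S : dset e u' S != 0 by rewrite dset_eq0 /S !inE.
by exists S; [apply: imset_f | rewrite (eqP uS) => /esym/eqP; apply/negP].
Qed.

End PreimPartition.

Section TwinClique.
Variables (T : finType) (e : rel T) (W : {set T}).
Hypotheses (e_sym : symmetric e) (e_irr : irreflexive e) (nontriv : 1 < #|T|).
Hypotheses (twinW : {in W &, forall u v, twin e u v}) (completeW : complete_on e W).

Lemma twin_set_adj x w : x \in nbhS e W :\: W -> w \in W -> e w x.
Proof.
case/setDP => /bigcupP[w0 w0W]; rewrite inE => ew0x xW wW.
have [<- // | w0w] := eqVneq w0 w.
by apply: (twin_edge (twinW w0W wW) ew0x); apply: contraNneq xW => ->.
Qed.

Lemma locating_pblock_twin P w w' :
  locating_partition e P -> twin e w w' -> w != w' -> pblock P w != pblock P w'.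
Proof.
case=> partP loc tw ww'; apply/negP => /eqP samew.
have [S SP] := loc w w' ww'; apply.
have sameS : (w \in S) = (w' \in S) by rewrite -!(pblock_eqE _ partP SP) samew.
have [wS | wS] := boolP (w \in S).
  have w'S : w' \in S by rewrite -sameS.
  by move: wS w'S; rewrite -!(dset_eq0 e) => /eqP-> /eqP->.
by apply: dset_twin; rewrite // -sameS.
Qed.

Lemma locating_card_gt P x :
  x \in nbhS e W :\: W -> locating_partition e P -> #|W| < #|P|.
Proof.
move=> xN hP; have [partP loc] := hP; have [/eqP cov _ _] := and3P partP.
have pblockP y : pblock P y \in P by rewrite pblock_mem // cov inE.
have inj : {in W &, injective (pblock P)}.
  move=> w w' wW w'W /eqP; apply: contraTeq => ww'.
  exact: locating_pblock_twin hP (twinW wW w'W) ww'.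
rewrite ltnNge; apply/negP => cardP.
have onto : pblock P @: W = P.
  apply/eqP; rewrite eqEcard card_in_imset // cardP andbT.
  by apply/subsetP => _ /imsetP[w _ ->].
have /imsetP[w wW xw] : pblock P x \in pblock P @: W by rewrite onto.
have [_ xW] := setDP xN; have x_neq_w : x != w by apply: contraNneq xW => ->.
have [S SP] := loc x w x_neq_w; apply.
have /imsetP[w' w'W defS] : S \in pblock P @: W by rewrite onto.
have sameS : (x \in S) = (w \in S) by rewrite -!(pblock_eqE _ partP SP) xw.
have [wS | wS] := boolP (w \in S).
  have xS : x \in S by rewrite sameS.
  by move: xS wS; rewrite -!(dset_eq0 e) => /eqP-> /eqP->.
have w'S : w' \in S by rewrite defS mem_pblock cov inE.
have w_neq_w' : w != w' by apply: contraNneq wS => ->.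
rewrite (dset_eq1 nontriv _ w'S (completeW wW w'W w_neq_w')) //.
by rewrite (dset_eq1 nontriv _ w'S) ?sameS // e_sym twin_set_adj.
Qed.

Section GluePartition.
Variables (v w1 : T) (f : T -> T).
Local Notation X := (~: (v |: W)).
Hypotheses (vW : v \notin W) (f_inj : {in X &, injective f}).
Hypotheses (fXW : {in X, forall x, f x \in W}).
Hypotheses (w1W : w1 \in W) (w1_fX : w1 \notin f @: X).
Hypothesis dist_v : forall z, z \in nbhS e W :\: W -> dist e v z <> dset e v W.

Let g y := if y \in X then f y else y.
Local Notation P := (preim_partition g [set: T]).

Let gX y : y \in X -> g y = f y. Proof. by rewrite /g => ->. Qed.
Let gNX y : y \notin X -> g y = y. Proof. by rewrite /g => /negbTE->. Qed.
Let XE y : (y \in X) = (y != v) && (y \notin W). Proof. by rewrite !inE negb_or. Qed.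

Lemma glue_partition_separates x :
  x \in X -> exists2 S, S \in P & dset e x S <> dset e (f x) S.
Proof.
move=> xX; have fxW := fXW xX; move: (xX); rewrite XE => /andP[xv xW].
have [xN | xN] := boolP (x \in nbhS e W).
  exists [set v].
    apply: preim_partition_set1 => z; rewrite (@gNX v) ?XE ?eqxx //.
    have [zX gz | /gNX-> //] := boolP (z \in X).
    by move: vW; rewrite -gz gX // fXW.
  rewrite !dset1 !(dist_sym e_sym _ v) -(dset_twin_set e_sym twinW vW fxW).
  by apply: dist_v; rewrite inE xN xW.
exists [set w1].
  apply: preim_partition_set1 => z; rewrite (@gNX w1) ?XE ?w1W ?andbF //.
  have [zX fz | /gNX-> //] := boolP (z \in X).
  by move: w1_fX; rewrite -fz gX // imset_f.
have fx_w1 : f x != w1 by apply: contraNneq w1_fX => <-; apply: imset_f.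
have fx_w1_adj : dist e (f x) w1 = 1 by apply/eqP; rewrite dist_eq1 // completeW.
rewrite !dset1 fx_w1_adj => /eqP; rewrite dist_eq1 // => exw1; case/negP: xN.
by apply/bigcupP; exists w1; rewrite // inE e_sym.
Qed.

Lemma glue_partition_locating : locating_partition e P.
Proof.
have collide x y : x \in X -> x != y -> g x = g y -> y = f x.
  move=> xX xy; rewrite gX //; have [yX | /gNX-> //] := boolP (y \in X).
  by rewrite gX // => /(f_inj xX yX) eq_xy; rewrite eq_xy eqxx in xy.
apply: preim_partition_locating => u u' uu' guu.
have [uX | uNX] := boolP (u \in X).
  by rewrite (collide u u'); first exact: glue_partition_separates.
have [u'X | u'NX] := boolP (u' \in X).
  have [S SP neq] := glue_partition_separates u'X.
  by exists S => //; rewrite (collide u' u) 1?eq_sym // => /esym.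
by move: guu; rewrite !gNX // => /eqP; rewrite (negbTE uu').
Qed.

Lemma card_glue_partition : #|P| = #|W|.+1.
Proof.
rewrite card_preim_partition (_ : g @: _ = v |: W) ?cardsU1 ?vW //.
apply/setP => t; apply/imsetP/idP => [[y _ ->] | tvW]; last first.
  by exists t; rewrite ?gNX // inE negbK.
have [yX | yNX] := boolP (y \in X); first by rewrite gX // inE fXW ?orbT.
by rewrite gNX // -[_ |: _]setCK inE.
Qed.

End GluePartition.

Lemma locating_of_distinguishing v :
  #|T| <= 2 * #|W| -> W_distinguishing e W v ->
  exists2 P, locating_partition e P & #|P| = #|W|.+1.
Proof.
move=> small [vW dist_v].
have cardX : #|~: (v |: W)| < #|W|.
  by move: small; rewrite -(cardsC (v |: W)) cardsU1 vW; lia.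
have [f [f_inj fXW [w1 w1W w1_fX]]] := exists_inj_avoid cardX.
by eexists; [apply: glue_partition_locating w1_fX _ | apply: card_glue_partition].
Qed.

Lemma partition_dim_of_distinguishing v :
  (forall x y, connect e x y) -> #|T| <= 2 * #|W| -> W_distinguishing e W v ->
  partition_dim_is e #|W|.+1.
Proof.
move=> e_conn small dv; split; first exact: locating_of_distinguishing dv.
have [vW _] := dv; have [w wW] : exists w, w \in W.
  by apply/set0Pn; apply: contraTneq small => ->; rewrite cards0 -ltnNge (ltnW nontriv).
have /set0Pn[x xN] := nbhS_setD_neq0 e_sym wW vW (e_conn w v).
by move=> P; apply: locating_card_gt xN.
Qed.

Lemma isolated_distinguishing x :
  x \in nbhS e W :\: W -> (forall y, y \in nbhS e W :\: W -> ~~ e x y) ->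
  W_distinguishing e W x.
Proof.
move=> xN iso; have [/bigcupP[w wW] /[!inE] ewx xW] := setDP xN.
have dxw : dist e x w = 1 by apply/eqP; rewrite dist_eq1 // e_sym.
split=> // z zN; rewrite (dset_twin_set e_sym twinW xW wW) dxw.
have [-> | zx] := eqVneq z x; first by rewrite dist_self.
by move/eqP; rewrite dist_eq1 //; apply/negP/iso.
Qed.

Lemma twin_number_closed w y :
  #|W| = twin_number e -> w \in W -> twin e w y -> y \in W.
Proof.
move=> tauW wW twy; apply: contraT => yW.
have : y |: W \subset [set z | twin e w z].
  by apply/subsetP => z /setU1P[-> | zW]; rewrite inE // twinW.
have tau_max : #|[set z | twin e w z]| <= twin_number e.
  exact: (@leq_bigmax _ (fun x => #|[set z | twin e x z]|) w).
move/subset_leq_card/leq_trans/(_ tau_max).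
by rewrite cardsU1 yW add1n tauW ltnn.
Qed.

Lemma universal_nbh_outside v :
  #|W| = twin_number e -> v \in nbhS e W :\: W ->
  (forall y, y \in nbhS e W :\: W -> y != v -> e v y) ->
  exists2 u, u \notin cnbhS e W & e v u.
Proof.
move=> tauW vN univ; have [/bigcupP[w wW] /[!inE] ewv vW] := setDP vN.
have [/existsP[u /andP[uN evu]] | /existsPn inside] :=
  boolP [exists u, (u \notin cnbhS e W) && e v u]; first by exists u.
have /(twin_number_closed tauW wW) : twin e w v; last by rewrite (negbTE vW).
apply/eqP/setP => y; rewrite !inE.
have [yW | yW] := boolP (y \in W).
  have [-> | yw] := eqVneq y w; first by rewrite e_irr andbF.
  have yv : y != v by apply: contraNneq vW => <-.
  have ewy : e w y by apply: completeW; rewrite // eq_sym.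
  by rewrite yv ewy e_sym (twin_set_adj vN yW).
apply/andP/andP => [[yv ewy] | [yw evy]].
  split; first by apply: contraNneq yW => ->.
  by apply: univ yv; rewrite inE yW; apply/bigcupP; exists w; rewrite ?inE.
split; first by apply: contraTneq evy => ->; rewrite e_irr.
apply: (twin_set_adj _ wW); rewrite inE yW /=.
by move: (inside y); rewrite evy andbT negbK /cnbhS inE (negbTE yW) orbF.
Qed.

End TwinClique.

Theorem lemma24 (T : finType) (e : rel T)
  (e_sym : symmetric e) (e_irr : irreflexive e)
  (e_conn : forall u v : T, connect e u v)
  (nontriv : 1 < #|T|)
  (tau_big : #|T| < 2 * twin_number e)
  (W : {set T}) (hW : tau_set e W) (hWc : complete_on e W) :
  let NW := nbhS e W :\: W in
  ((exists v, W_distinguishing e W v) ->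
      partition_dim_is e (twin_number e).+1) /\
  ((exists2 x, x \in NW & forall y, y \in NW -> ~~ e x y) ->
      partition_dim_is e (twin_number e).+1) /\
  (#|NW| = 1 -> partition_dim_is e (twin_number e).+1) /\
  (forall v, v \in NW -> (forall y, y \in NW -> y != v -> e v y) ->
      exists2 u, u \notin cnbhS e W & e v u).
Proof.
move=> NW; case: hW => twinW tauW; rewrite -tauW in tau_big *.
have partA : (exists v, W_distinguishing e W v) -> partition_dim_is e #|W|.+1.
  by case=> v; apply: partition_dim_of_distinguishing => //; apply: ltnW.
have partB : (exists2 x, x \in NW & forall y, y \in NW -> ~~ e x y) ->
    partition_dim_is e #|W|.+1.
  by case=> x xN iso; apply: partA; exists x; apply: isolated_distinguishing.
do 2!split=> //; split=> [/eqP/cards1P[a NWa] | v]; last exact: universal_nbh_outside.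
by apply: partB; exists a => [|y]; rewrite NWa ?inE // => /eqP->; rewrite e_irr.
Qed.
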